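(* Let $G$, $H\sqsubseteq G$, the local supervisors $I=\{1,\dots,n\}$ with observable sets $\Sigma_{o,i}$, controllable sets $\Sigma_{c,i}$ and delay bounds $N_{o,i}\in\mathbb{N}$ be as described in the context, and let $\sigma\in\Sigma_c$. Then $\mathcal{L}(H)$ is delay coobservable w.r.t. $N_{o,1},\ldots,N_{o,n}$, $\sigma$, and $\mathcal{L}(G)$ if and only if the following holds: for every $s\in\mathcal{L}(H)$ with $s\sigma\in\mathcal{L}(G)\setminus\mathcal{L}(H)$, and for every tuple $(s_i)_{i\in I^c(\sigma)}\in\mathcal{T}^{\sigma}_{conf}(s)$, there exists $i\in I^c(\sigma)$ such that $s_i\sigma\notin\mathcal{L}(H^{aug}_{N_{o,i}})$.
   Context: $G=(Q,\Sigma,\delta,\Gamma,q_0,Q_m)$ is a deterministic finite automaton with finite state set $Q$, finite event set $\Sigma$, partial transition function $\delta$ (extended to strings as usual), active event sets $\Gamma(q)=\{e\in\Sigma:\delta(q,e)\text{ defined}\}$, initial state $q_0$; $\mathcal{L}(G)$ is its generated language. $H=(Q_H,\Sigma,\delta_H,\Gamma_H,q_0,Q_{m,H})$ is a sub-automaton of $G$ (obtained from $G$ by deleting some states and all transitions attached to them); $\mathcal{L}(H)$ is the specification language. For a string $s$, $|s|$ is its length, $s_{-m}$ is the prefix of $s$ of length $\max\{0,|s|-m\}$, and $\Sigma^{\le M}$ is the set of strings of length at most $M$. There are $n$ local supervisors indexed by $I=\{1,\dots,n\}$; supervisor $i$ has observable events $\Sigma_{o,i}\subseteq\Sigma$, unobservable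 events $\Sigma_{uo,i}=\Sigma\setminus\Sigma_{o,i}$, controllable events $\Sigma_{c,i}\subseteq\Sigma$, and an observation delay bound $N_{o,i}\in\mathbb{N}$; $\Sigma_c=\bigcup_i\Sigma_{c,i}$, and for $\sigma\in\Sigma_c$, $I^c(\sigma)=\{i\in I:\sigma\in\Sigma_{c,i}\}$. $P_i$ is the natural projection onto $\Sigma_{o,i}^*$ (erasing events not in $\Sigma_{o,i}$). For $s\in\mathcal{L}(G)$, $\Theta_i^{N_{o,i}}(s)=\{P_i(s_{-m}):m\in[0,N_{o,i}]\}$; for $t\in\Sigma_{o,i}^*$, $(\Theta_i^{N_{o,i}})^{-1}(t)=\{u\in\mathcal{L}(G):t\in\Theta_i^{N_{o,i}}(u)\}$, both extended to sets elementwise. $\mathcal{L}(H)$ is delay coobservable w.r.t. $N_{o,1},\dots,N_{o,n}$, $\sigma\in\Sigma_c$, and $\mathcal{L}(G)$ if for every $s\in\mathcal{L}(H)$: $s\sigma\in\mathcal{L}(G)\setminus\mathcal{L}(H)$ implies that there exists $i\in I^c(\sigma)$ with $(\Theta_i^{N_{o,i}})^{-1}(\Theta_i^{N_{o,i}}(s))\sigma\cap\mathcal{L}(H)=\emptyset$. The augmented automaton $H^{aug}_{N}$ (for $N\in\mathbb{N}$) has states $Q_H\cup\{q_{dis}\}$, initial state $q_0$, and transitions: for $q\in Q_H$, $e\in\Sigma$, $\delta^{aug}(q,e)=\delta_H(q,e)$ if $e\in\Gamma_H(q)$; $\delta^{aug}(q,e)=q_{dis}$ if $e\notin\Gamma_H(q)$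 and there is $s'\in\Sigma^{\le N}$ with $\delta_H(q,s')$ defined and $e\in\Gamma_H(\delta_H(q,s'))$; undefined otherwise (no transitions leave $q_{dis}$). For $s\in\mathcal{L}(H)$ and $\sigma\in\Sigma_c$, $\mathcal{T}^{\sigma}_{conf}(s)$ is the set of tuples $(s_i)_{i\in I^c(\sigma)}$ of strings with $P_i(s_i)\in\Theta_i^{N_{o,i}}(s)$ for all $i\in I^c(\sigma)$. *)

From mathcomp Require Import all_boot.
Set Implicit Arguments. Unset Strict Implicit. Unset Printing Implicit Defensive.

Section Automata.
Variables (Q Sigma : finType).

Fixpoint deltas (d : Q -> Sigma -> option Q) (q : Q) (s : seq Sigma) : option Q :=
  match s with
  | [::] => Some q
  | e :: s' => match d q e with Some q' => deltas d q' s' | None => None end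
  end.

Definition lang (d : Q -> Sigma -> option Q) (q0 : Q) (s : seq Sigma) : Prop :=
  deltas d q0 s <> None.

(* Transition function of the sub-automaton H of G with state set QH
   (states outside QH and all transitions attached to them deleted). *)
Definition deltaH (d : Q -> Sigma -> option Q) (QH : {set Q}) (q : Q) (e : Sigma)
  : option Q :=
  if q \in QH then
    match d q e with
    | Some q' => if q' \in QH then Some q' else None
    | None => None
    end
  else None.

Definition proj (So : {set Sigma}) (s : seq Sigma) : seq Sigma :=
  [seq e <- s | e \in So].

Definition trunc (m : nat) (s : seq Sigma) : seq Sigma := take (size s - m) s.

Definition Theta (So : {set Sigma}) (N : nat) (s t : seq Sigma) : Prop :=
  exists m, m <= N /\ t = proj So (trunc m s).

Definition delay_coobservable (d : Q -> Sigma -> option Q) (q0 : Q) (QH : {set Q})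
  (n : nat) (So Sc : 'I_n -> {set Sigma}) (No : 'I_n -> nat) (sigma : Sigma) : Prop :=
  forall s : seq Sigma,
    lang (deltaH d QH) q0 s ->
    lang d q0 (rcons s sigma) -> ~ lang (deltaH d QH) q0 (rcons s sigma) ->
    exists i : 'I_n, sigma \in Sc i /\
      (* (Theta^{-1}(Theta(s))) sigma  \cap L(H) = empty *)
      forall u : seq Sigma, lang d q0 u ->
        (exists t, Theta (So i) (No i) u t /\ Theta (So i) (No i) s t) ->
        ~ lang (deltaH d QH) q0 (rcons u sigma).

(* Augmented automaton H^aug_N: states option Q, None = q_dis.
   Transition relation (it is deterministic; given relationally). *)
Definition aug_trans (d : Q -> Sigma -> option Q) (QH : {set Q}) (N : nat)
  (x : option Q) (e : Sigma) (y : option Q) : Prop :=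
  match x with
  | None => False
  | Some q =>
      q \in QH /\
      ((exists q', deltaH d QH q e = Some q' /\ y = Some q') \/
       (deltaH d QH q e = None /\ y = None /\
        exists s' : seq Sigma, size s' <= N /\
          exists q'', deltas (deltaH d QH) q s' = Some q'' /\
                      deltaH d QH q'' e <> None))
  end.

Fixpoint aug_reach (d : Q -> Sigma -> option Q) (QH : {set Q}) (N : nat)
  (x : option Q) (s : seq Sigma) (y : option Q) : Prop :=
  match s with
  | [::] => y = x
  | e :: s' => exists z, aug_trans d QH N x e z /\ aug_reach d QH N z s' y
  end.

Definition lang_aug (d : Q -> Sigma -> option Q) (q0 : Q) (QH : {set Q}) (N : nat)
  (s : seq Sigma) : Prop :=
  exists y, aug_reach d QH N (Some q0) s y.

End Automata.

(* A string u is confused by supervisor i with s, i.e. u lies in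
   Theta_i^-1(Theta_i(s)), exactly when u = v w with P_i(v) in Theta_i(s) and
   |w| <= N_o,i.  On the other hand v sigma is accepted by H^aug_N exactly when
   some v w sigma with |w| <= N lies in L(H).  Hence supervisor i disables
   sigma safely after s iff no v with P_i(v) in Theta_i(s) has v sigma in
   L(H^aug_N_o,i), and the theorem is the exchange of "exists i, forall v"
   with "forall tuples (v_i), exists i", a choice argument. *)
From Stdlib Require Import Classical ClassicalEpsilon.
From mathcomp Require Import all_boot.

Set Implicit Arguments.
Unset Strict Implicit.
Unset Printing Implicit Defensive.

Lemma exists_forall_choiceP (I X : Type) (x0 : X) (C : I -> Prop)
    (P R : I -> X -> Prop) :
  (exists i, C i /\ forall x, P i x -> R i x) <->
  (forall f : I -> X, (forall i, C i -> P i (f i)) -> exists i, C i /\ R i (f i)).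
Proof.
split=> [[i [Ci PR]] f Pf | H]; first by exists i; split; last exact/PR/Pf.
apply: NNPP => noi.
have witness i : C i -> exists x, P i x /\ ~ R i x.
  move=> Ci; apply: NNPP => nox; apply: noi; exists i; split=> // x Px.
  by apply: NNPP => nR; apply: nox; exists x.
pose f i := epsilon (inhabits x0) (fun x => P i x /\ ~ R i x).
have [i [Ci Ri]] : exists i, C i /\ R i (f i).
  by apply: H => i Ci; exact: (epsilon_spec _ _ (witness i Ci)).1.
exact: (epsilon_spec _ _ (witness i Ci)).2 Ri.
Qed.

Section Automata.
Variables (Q Sigma : finType) (d : Q -> Sigma -> option Q) (QH : {set Q}).
Implicit Types (q : Q) (e : Sigma) (s u v w : seq Sigma).

Lemma deltas_cat (f : Q -> Sigma -> option Q) q v w :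
  deltas f q (v ++ w) = if deltas f q v is Some q' then deltas f q' w else None.
Proof. by elim: v q => [|e v IHv] q //=; case: (f q e). Qed.

Lemma deltas_rcons (f : Q -> Sigma -> option Q) q v e :
  deltas f q (rcons v e) = if deltas f q v is Some q' then f q' e else None.
Proof. by rewrite -cats1 deltas_cat; case: (deltas f q v) => //= q'; case: (f q' e). Qed.

Lemma lang_catl (f : Q -> Sigma -> option Q) q v w :
  lang f q (v ++ w) -> lang f q v.
Proof. by rewrite /lang deltas_cat; case: (deltas f q v). Qed.

Lemma deltaH_Some q e q' :
  deltaH d QH q e = Some q' -> d q e = Some q' /\ q' \in QH.
Proof.
rewrite /deltaH; case: (q \in QH) (d q e) => [] // [a|] //.
by case: ifP => // aH [<-].
Qed.

Lemma deltasH_in q v q' :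
  q \in QH -> deltas (deltaH d QH) q v = Some q' -> q' \in QH.
Proof.
elim: v q => [|e v IHv] q /= qH; first by case=> <-.
by case E: (deltaH d QH q e) => [a|] //; apply: IHv; case: (deltaH_Some E).
Qed.

Lemma langH_lang q v : lang (deltaH d QH) q v -> lang d q v.
Proof.
rewrite /lang; elim: v q => [|e v IHv] q //=.
by case E: (deltaH d QH q e) => [a|] //; rewrite (deltaH_Some E).1; apply: IHv.
Qed.

Variable q0 : Q.
Hypothesis q0H : q0 \in QH.

Section Augmented.
Variable N : nat.

Lemma aug_reach_rconsP q v e y :
  aug_reach d QH N (Some q) (rcons v e) y <->
  exists2 q1, deltas (deltaH d QH) q v = Some q1 & aug_trans d QH N (Some q1) e y.
Proof.
elim: v q => [|a v IHv] q /=.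
  by split=> [[z [tr ->]] | [_ [<-] tr]]; [exists q | exists y].
split=> [[[q'|] [[qH tr] reach]] | [q1]].
- case: tr => [[q'' [E [q''E]]] | [_ []] //]; subst q''; rewrite E; exact/IHv.
- by case: v {IHv} reach => [|b v] /= [z []].
- case E: (deltaH d QH q a) => [q'|] // reach tr.
  exists (Some q'); split; last by apply/IHv; exists q1.
  by split; [move: E; rewrite /deltaH; case: (q \in QH) | left; exists q'].
Qed.

Lemma lang_aug_rconsP v e :
  lang_aug d q0 QH N (rcons v e) <->
  exists2 w, size w <= N & lang (deltaH d QH) q0 (rcons (v ++ w) e).
Proof.
split=> [[y /aug_reach_rconsP [q1 Ev] [_ tr]] | [w sw]].
  rewrite /lang; case: tr => [[q' [E _]] | [_ [_ [w [sw [q'' [Ew enabled]]]]]]].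
  - by exists [::]; rewrite // cats0 deltas_rcons Ev E.
  - by exists w; rewrite // deltas_rcons deltas_cat Ev Ew.
rewrite /lang deltas_rcons deltas_cat.
case Ev: (deltas _ q0 v) => [q1|] //; case Ew: (deltas _ q1 w) => [q''|] // enabled.
have q1H := deltasH_in q0H Ev.
case E: (deltaH d QH q1 e) => [q'|].
  exists (Some q'); apply/aug_reach_rconsP; exists q1 => //.
  by split=> //; left; exists q'.
exists None; apply/aug_reach_rconsP; exists q1 => //; split=> //; right.
by split=> //; split=> //; exists w; split=> //; exists q''.
Qed.

End Augmented.

Lemma ThetaP (So : {set Sigma}) N u t :
  Theta So N u t <-> exists v w, [/\ u = v ++ w, size w <= N & t = proj So v].
Proof.
split=> [[m [mN ->]] | [v [w [-> sw ->]]]].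
  exists (trunc m u), (drop (size u - m) u); split.
  - by rewrite cat_take_drop.
  - by rewrite size_drop -minnE (leq_trans (geq_minr _ _) mN).
  - by [].
exists (size w); split=> //.
by rewrite /trunc size_cat addnK take_size_cat.
Qed.

Lemma confusable_disabled_augP (So : {set Sigma}) N sigma s :
  (forall u, lang d q0 u ->
     (exists t, Theta So N u t /\ Theta So N s t) ->
     ~ lang (deltaH d QH) q0 (rcons u sigma)) <->
  (forall v, Theta So N s (proj So v) -> ~ lang_aug d q0 QH N (rcons v sigma)).
Proof.
split=> [disabled v sv /lang_aug_rconsP [w sw Lvw] | disabled u _].
  apply: (disabled (v ++ w) _ _ Lvw).
    by apply/langH_lang/(lang_catl (w := [:: sigma])); rewrite cats1.
  by exists (proj So v); split=> //; apply/ThetaP; exists v, w.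
move=> [t [/ThetaP [v [w [-> sw ->]]] sv]] Lu.
by apply: (disabled v sv); apply/lang_aug_rconsP; exists w.
Qed.

End Automata.

Theorem theorem1 (Q Sigma : finType) (d : Q -> Sigma -> option Q) (q0 : Q)
  (QH : {set Q}) (hq0 : q0 \in QH)
  (n : nat) (So Sc : 'I_n -> {set Sigma}) (No : 'I_n -> nat)
  (sigma : Sigma) (hsigma : exists i : 'I_n, sigma \in Sc i) :
  delay_coobservable d q0 QH So Sc No sigma <->
  (forall s : seq Sigma,
     lang (deltaH d QH) q0 s ->
     lang d q0 (rcons s sigma) -> ~ lang (deltaH d QH) q0 (rcons s sigma) ->
     forall ss : 'I_n -> seq Sigma,
       (forall i : 'I_n, sigma \in Sc i -> Theta (So i) (No i) s (proj (So i) (ss i))) ->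
       exists i : 'I_n, sigma \in Sc i /\
         ~ lang_aug d q0 QH (No i) (rcons (ss i) sigma)).
Proof.
have choice s := exists_forall_choiceP [::] (fun i => sigma \in Sc i)
  (fun i v => Theta (So i) (No i) s (proj (So i) v))
  (fun i v => ~ lang_aug d q0 QH (No i) (rcons v sigma)).
have local i s := confusable_disabled_augP d hq0 (So i) (No i) sigma s.
split=> coobs s Ls LGs LHs.
- apply/choice; have [i [Ci disabled]] := coobs s Ls LGs LHs.
  by exists i; split=> //; apply/local.
- have /choice [i [Ci disabled]] := coobs s Ls LGs LHs.
  by exists i; split=> //; apply/local.
Qed.
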